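(* Let $\mathcal{M}_{\mathbb{P}}=(\mathcal{M},\mathbb{P})$ be an uncertain parametric MDP, let $\eta\in(0,1)$ be a desired lower bound and $\beta\in(0,1)$ a desired confidence probability, and set \[N=\Big\lceil \frac{\log(1-\beta)}{\log\eta}\Big\rceil .\] If $\mathcal{U}_N$ is a set of $N$ parameter instantiations sampled independently from $\mathbb{P}$ and the threshold $\lambda^*(\mathcal{U}_N)$ of the specification $\varphi$ is chosen, for any sample set, such that $\mathcal{M}[u]\models\varphi$ for all $u\in\mathcal{U}_N$, then $\mathbb{P}^N\{F(\mathcal{M}_{\mathbb{P}},\varphi)\ge\eta\}\ge\beta$; moreover, this $N$ is the smallest sample size for which the lower bound $(1-\beta)^{1/N}$ of the guarantee $\mathbb{P}^N\{F(\mathcal{M}_{\mathbb{P}},\varphi)\ge(1-\beta)^{1/N}\}\ge\beta$ is at least $\eta$.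
   Context: A parametric MDP (pMDP) is $\mathcal{M}=(S,\mathit{Act},s_I,V,\mathcal{P})$ with finite states, finite actions, initial state, finite parameter set $V$ and transition function $\mathcal{P}:S\times\mathit{Act}\times S\to\mathbb{Q}[V]$. Instantiations $u:V\to\mathbb{R}$ form the parameter space $\mathcal{V}_{\mathcal{M}}$; $\mathcal{M}[u]$ is the instantiated MDP, assumed well-defined and graph-preserving. An uncertain pMDP is $\mathcal{M}_{\mathbb{P}}=(\mathcal{M},\mathbb{P})$ with $\mathbb{P}$ a probability distribution on $\mathcal{V}_{\mathcal{M}}$. A specification $\varphi$ consists of a measure on MDPs (e.g. max/min reachability probability or expected reward), a comparison operator in $\{<,\le,\ge,>\}$ and a threshold; $\mathcal{M}[u]\models\varphi$ means the measure's value on $\mathcal{M}[u]$ satisfies the comparison. The satisfaction probability is $F(\mathcal{M}_{\mathbb{P}},\varphi)=\int I_\varphi(u)\,d\mathbb{P}(u)$ with $I_\varphi(u)=1$ iff $\mathcal{M}[u]\models\varphi$. $\mathbb{P}^N$ is the product measure of the i.i.d. sample set; $\lceil x\rceil$ rounds up to the nearest integer. *)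

From HB Require Import structures.
From mathcomp Require Import all_boot all_order all_algebra.
From mathcomp Require Import all_classical all_reals all_analysis.
From mathcomp Require mpoly.
Import (canonicals, coercions) mpoly.

Set Implicit Arguments.
Unset Strict Implicit.
Unset Printing Implicit Defensive.
Import Order.TTheory GRing.Theory Num.Theory.
Local Open Scope classical_set_scope.
Local Open Scope ring_scope.

(** Parameters: the finite parameter set V is {x_0, ..., x_{k-1}} = 'I_k;
    an instantiation u : V -> R is a k-tuple of reals (the parameter space
    k.-tuple R carries the product Borel sigma-algebra). *)

Record pMDP (k : nat) := PMDP {
  pS : finType;
  pAct : finType;
  psI : pS;
  pP : pS -> pAct -> pS -> mpoly.mpoly k rat }.
Arguments pS {k} p.
Arguments pAct {k} p.
Arguments psI {k} p.
Arguments pP {k} p _ _ _.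

Record MDP (R : Type) := MkMDP {
  mS : finType;
  mAct : finType;
  msI : mS;
  mP : mS -> mAct -> mS -> R }.
Arguments mP {R} m _ _ _.

Definition peval (R : realType) (k : nat) (p : mpoly.mpoly k rat)
  (u : k.-tuple R) : R :=
  mpoly.mmap (@ratr R) (fun i => tnth u i) p.

Definition inst (R : realType) k (M : pMDP k) (u : k.-tuple R) : MDP R :=
  @MkMDP R (pS M) (pAct M) (psI M)
    (fun s a s' => peval (pP M s a s') u).

(** M[u] is well defined (each row P(s,a,.) is a probability distribution,
    or identically zero when a is not enabled in s) and graph preserving. *)
Definition well_defined_gp (R : realType) k (M : pMDP k) (u : k.-tuple R) : Prop :=
  (forall s a s', 0 <= peval (pP M s a s') u) /\
  (forall s a, \sum_(s' : pS M) peval (pP M s a s') u = 1 \/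
               forall s', peval (pP M s a s') u = 0) /\
  (forall s a s', pP M s a s' != 0 -> peval (pP M s a s') u != 0).

Inductive cmp := CLt | CLe | CGe | CGt.

Definition cmp_eval (R : realType) (c : cmp) (x y : \bar R) : bool :=
  match c with
  | CLt => (x < y)%E
  | CLe => (x <= y)%E
  | CGe => (x >= y)%E
  | CGt => (x > y)%E
  end.

(** A specification: a measure on MDPs (possibly extended-real valued, e.g.
    expected rewards), a comparison operator and a threshold. *)
Record spec (R : realType) := Spec {
  smeas : MDP R -> \bar R;
  sop : cmp;
  sthr : R }.

Definition sat (R : realType) (D : MDP R) (phi : spec R) : Prop :=
  cmp_eval (sop phi) (smeas phi D) (sthr phi)%:E.

Definition Ind (R : realType) k (M : pMDP k) (phi : spec R) (u : k.-tuple R) : \bar R :=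
  (\1_[set u | sat (inst M u) phi] u)%:E.

Definition satprob (R : realType) k (M : pMDP k)
  (P : probability (k.-tuple R) R) (phi : spec R) : \bar R :=
  (\int[P]_u Ind M phi u)%E.

(** Q is the N-fold product measure P^N on N-tuples (i.i.d. samples):
    it agrees with the product of P on measurable rectangles (this
    uniquely determines the product probability). *)
Definition is_product_prob d (T : measurableType d) (R : realType) (N : nat)
  (P : probability T R) (Q : probability (N.-tuple T) R) : Prop :=
  forall A : 'I_N -> set T, (forall i, measurable (A i)) ->
    Q [set t | forall i, A i (tnth t i)] = (\prod_(i < N) P (A i))%E.

From HB Require Import structures.
From mathcomp Require Import all_boot all_order all_algebra.
From mathcomp Require Import all_classical all_reals all_analysis.
From mathcomp Require Import measurable_realfun.

Import Order.TTheory GRing.Theory Num.Theory.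
Local Open Scope classical_set_scope.
Local Open Scope ring_scope.

(* After multiplying the threshold by -1 if necessary, the set of instantiations
   satisfying the specification grows with the threshold l, so its probability
   F(l) is nondecreasing.  The thresholds with F(l) < eta form a down-closed set
   of reals, which is exhausted by a nondecreasing sequence; hence the union B
   of the corresponding satisfaction sets has probability at most eta.  If the
   threshold computed from a sample has F < eta, every sample point lies in B,
   an event of probability at most eta^N under the product measure.  So the
   confidence is at least 1 - eta^N, which is >= beta exactly when
   N >= ln(1 - beta) / ln eta. *)

Lemma nondecreasing_seq_cofinal (R : realType) (D : set R) :
  (exists l, D l) -> (forall x y, x <= y -> D y -> D x) ->
  exists a : nat -> R, [/\ {homo a : n m / (n <= m)%N >-> n <= m},
    forall n, D (a n) & forall l, D l -> exists n, l <= a n].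
Proof.
move=> [l0 Dl0] Ddown.
have [ubD|unbD] := pselect (has_ubound D); last first.
  exists (fun n => n%:R); split => [n m|n|l _].
  - by rewrite ler_nat.
  - have [[y Dy ny]|noy] := pselect (exists2 y, D y & n%:R <= y).
      exact: Ddown ny Dy.
    exfalso; apply: unbD; exists n%:R => y Dy.
    by rewrite leNgt; apply/negP => /ltW ny; apply: noy; exists y.
  - by exists (Num.truncn l).+1; exact/ltW/truncnS_gt.
have supD : has_sup D by split; [exists l0|].
have [Dsup|nDsup] := pselect (D (sup D)).
  exists (fun=> sup D); split => // l Dl.
  by exists 0%N; exact: sup_upper_bound.
exists (fun n => sup D - n.+1%:R^-1); split => [n m nm|n|l Dl].
- by rewrite lerB // lef_pV2 ?posrE ?ltr0n // ler_nat ltnS.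
- have [|e De lte] := @sup_adherent _ D (n.+1%:R^-1) _ supD.
    by rewrite invr_gt0 ltr0n.
  exact: Ddown (ltW lte) De.
- have lt_l_sup : l < sup D.
    rewrite lt_neqAle (sup_upper_bound supD Dl) andbT.
    by apply: contra_notN nDsup => /eqP <-.
  have [n ltn] := ltr_add_invr lt_l_sup.
  by exists n; rewrite lerBrDr ltW.
Qed.

Lemma measure_bigcup_nondecreasing_le d (T : measurableType d) (R : realType)
    (mu : {measure set T -> \bar R}) (F : nat -> set T) (e : \bar R) :
  (forall n, measurable (F n)) -> nondecreasing_seq F ->
  (forall n, (mu (F n) <= e)%E) -> (mu (\bigcup_n F n) <= e)%E.
Proof.
move=> mF ndF muFe.
apply: cvge_to_le (nondecreasing_cvg_mu mF (bigcupT_measurable _ mF) ndF) _.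
exact: nearW.
Qed.

Section threshold_sets.
Context d (T : measurableType d) (R : realType) (mu : {measure set T -> \bar R}).
Variable f : R -> set T.
Hypothesis mf : forall l, measurable (f l).
Hypothesis ndf : forall x y, x <= y -> f x `<=` f y.

Lemma measure_threshold_nondecreasing : {homo mu \o f : x y / x <= y >-> (x <= y)%E}.
Proof. by move=> x y xy; apply: le_measure; rewrite ?inE //; exact: ndf. Qed.

Lemma small_threshold_sets_cover (e : R) : 0 <= e ->
  exists2 B, measurable B /\ (mu B <= e%:E)%E &
    forall l, (mu (f l) < e%:E)%E -> f l `<=` B.
Proof.
move=> e0; set D := [set l | (mu (f l) < e%:E)%E].
have [Dn0|D0] := pselect (exists l, D l); last first.
  exists set0; first by rewrite measure0 lee_fin.
  by move=> l Dl; exfalso; apply: D0; exists l.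
have Ddown x y : x <= y -> D y -> D x.
  by move=> xy; apply: le_lt_trans; exact: measure_threshold_nondecreasing.
have [a [nda Da cofa]] := @nondecreasing_seq_cofinal _ D Dn0 Ddown.
exists (\bigcup_n f (a n)); first split.
- exact: bigcupT_measurable.
- apply: measure_bigcup_nondecreasing_le => [n|n m nm|n].
  + exact: mf.
  + by apply/subsetPset/ndf/nda.
  + exact/ltW/Da.
- move=> l Dl; have [n lan] := cofa l Dl.
  by move=> x /(ndf _ _ lan) fx; exists n.
Qed.

End threshold_sets.

Lemma measurable_all_tnth d (T : measurableType d) (N : nat) (B : set T) :
  measurable B -> measurable [set t : N.-tuple T | forall i, B (tnth t i)].
Proof.
move=> mB.
have -> : [set t : N.-tuple T | forall i, B (tnth t i)] =
    \bigcap_(i in [set: 'I_N]) ((fun t : N.-tuple T => tnth t i) @^-1` B).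
  by apply/seteqP; split => t /= Bt i => [_|]; exact: Bt.
apply: fin_bigcap_measurable => [|i _]; first exact: finite_finset.
by rewrite -[_ @^-1` _]setTI; exact: measurable_tnth.
Qed.

Section scenario.
Context d (T : measurableType d) (R : realType) (P : probability T R).
Variable f : R -> set T.
Hypothesis mf : forall l, measurable (f l).
Hypothesis ndf : forall x y, x <= y -> f x `<=` f y.
Variables (N : nat) (Q : probability (N.-tuple T) R).
Hypothesis QE : is_product_prob P Q.

Lemma measurable_measure_threshold_ge (lam : N.-tuple T -> R) (e : R) :
  measurable_fun setT lam -> measurable [set U | (e%:E <= P (f (lam U)))%E].
Proof.
move=> mlam.
pose h l := fine (P (f l)).
have hE l : P (f l) = (h l)%:E by rewrite fineK ?fin_num_measure.
have mh : measurable_fun setT h.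
  apply: nondecreasing_measurable => // x y xy.
  by rewrite -lee_fin -!hE; exact: measure_threshold_nondecreasing.
have := mlam measurableT _ (mh measurableT _ (measurable_itv `[e, +oo[)).
rewrite !setTI; congr measurable; apply/seteqP; split => U /=;
  by rewrite in_itv /= andbT hE lee_fin.
Qed.

Lemma scenario_approach_bound (lam : N.-tuple T -> R) (e : R) :
  measurable_fun setT lam -> (forall U i, f (lam U) (tnth U i)) -> 0 <= e ->
  ((1 - e ^+ N)%:E <= Q [set U | (e%:E <= P (f (lam U)))%E])%E.
Proof.
move=> mlam flam e0.
have [B [mB PBe] Bf] := @small_threshold_sets_cover _ _ _ P _ mf ndf _ e0.
set G := [set U | _].
have mG : measurable G by exact: measurable_measure_threshold_ge.
have GC_cube : ~` G `<=` [set U | forall i, B (tnth U i)].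
  by move=> U /= /negP; rewrite -ltNge => small i; exact/(Bf _ small)/flam.
have Q_cube : (Q [set U | forall i, B (tnth U i)] <= (e ^+ N)%:E)%E.
  rewrite (QE (fun=> B)) // -(fineK (fin_num_measure P _ mB)) prodEFin lee_fin.
  rewrite prodr_const card_ord lerXn2r ?nnegrE ?fine_ge0 ?measure_ge0 //.
  by rewrite -lee_fin fineK ?fin_num_measure.
rewrite -[G]setCK probability_setC ?EFinB; last exact: measurableC.
apply: leeB => //; apply: le_trans Q_cube.
by apply: le_measure; rewrite ?inE //; [exact: measurableC|exact: measurable_all_tnth].
Qed.

End scenario.

Section sample_size.
Context (R : realType) (eta x : R).
Hypotheses (eta0 : 0 < eta) (eta1 : eta < 1) (x0 : 0 < x).

Let ln_eta_lt0 : ln eta < 0. Proof. by rewrite ln_lt0 // eta0. Qed.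

Lemma ler_expn_ln_div (n : nat) : (eta ^+ n <= x) = (ln x / ln eta <= n%:R).
Proof.
by rewrite -ler_ln ?posrE ?exprn_gt0 // lnXn // -(mulr_natr (ln eta)) mulrC ler_ndivrMr.
Qed.

Lemma ler_powR_invn_ln_div (n : nat) : (0 < n)%N ->
  (eta <= x `^ n%:R^-1) = (ln x / ln eta <= n%:R).
Proof.
move=> n0; rewrite -ler_ln ?posrE ?powR_gt0 // ln_powR ler_pdivlMl ?ltr0n //.
by rewrite ler_ndivrMr // mulrC.
Qed.

End sample_size.

Definition cmp_sign (R : realType) (c : cmp) : R :=
  match c with CLt | CLe => 1 | CGe | CGt => -1 end.

Lemma cmp_sign_sqr (R : realType) (c : cmp) : cmp_sign R c * cmp_sign R c = 1.
Proof. by case: c; rewrite /= ?mulr1 ?mulrNN ?mulr1. Qed.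

Lemma cmp_eval_sign_nondecreasing (R : realType) (c : cmp) (m : \bar R) (x y : R) :
  x <= y -> cmp_eval c m (cmp_sign R c * x)%:E -> cmp_eval c m (cmp_sign R c * y)%:E.
Proof.
rewrite -lee_fin => xy; case: c => /=; rewrite ?mul1r ?mulN1r ?EFinN => h.
- exact: lt_le_trans h xy.
- exact: le_trans h xy.
- by apply: le_trans h; rewrite leeN2.
- by apply: le_lt_trans h; rewrite leeN2.
Qed.

Lemma satprobE (R : realType) (k : nat) (M : pMDP k)
    (P : probability (k.-tuple R) R) (phi : spec R) :
  measurable [set u | sat (inst M u) phi] ->
  satprob M P phi = P [set u | sat (inst M u) phi].
Proof. by move=> msat; rewrite /satprob /Ind integral_indic ?setIT. Qed.

Theorem corollary1 (R : realType) (k : nat) (M : pMDP k)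
  (P : probability (k.-tuple R) R)
  (meas : MDP R -> \bar R) (op : cmp)
  (eta beta : R) (N : nat)
  (Q : probability (N.-tuple (k.-tuple R)) R)
  (lam : N.-tuple (k.-tuple R) -> R) :
  P [set u | well_defined_gp M u] = 1%E ->
  (forall l : R, measurable [set u | sat (inst M u) (Spec meas op l)]) ->
  0 < eta < 1 -> 0 < beta < 1 ->
  N%:Z = Num.ceil (ln (1 - beta) / ln eta) ->
  is_product_prob P Q ->
  measurable_fun setT lam ->
  (forall U : N.-tuple (k.-tuple R),
      forall i : 'I_N, sat (inst M (tnth U i)) (Spec meas op (lam U))) ->
  (beta%:E <= Q [set U | (eta%:E <= satprob M P (Spec meas op (lam U)))%E])%E
  /\ (eta <= (1 - beta) `^ (N%:R^-1)
      /\ forall n : nat, (0 < n)%N -> eta <= (1 - beta) `^ (n%:R^-1) -> (N <= n)%N).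
Proof.
move=> _ msat /andP[eta0 eta1] /andP[beta0 beta1] NE QE mlam lam_sat.
have beta1' : 0 < 1 - beta by rewrite subr_gt0.
set c := ln (1 - beta) / ln eta.
have N_leE n : (N <= n)%N = (c <= n%:R).
  by rewrite -lez_nat NE ceil_le_int -pmulrn.
have N0 : (0 < N)%N.
  have ln_eta_lt0 : ln eta < 0 by rewrite ln_lt0 // eta0.
  have ln_beta_lt0 : ln (1 - beta) < 0 by rewrite ln_lt0 // beta1' ltrBlDr ltrDl.
  have c0 : 0 < c by rewrite /c ltr_ndivlMr // mul0r.
  by rewrite -(ltr0n R); apply: lt_le_trans c0 _; rewrite -N_leE.
split; last split.
- set s := cmp_sign R op.
  pose g l := [set u | sat (inst M u) (Spec meas op (s * l))].
  have -> : [set U | (eta%:E <= satprob M P (Spec meas op (lam U)))%E] =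
            [set U | (eta%:E <= P (g (s * lam U)%R))%E].
    by apply/seteqP; split => U; rewrite /= satprobE // /g mulrA cmp_sign_sqr mul1r.
  have beta_le : (beta%:E <= (1 - eta ^+ N)%:E)%E.
    by rewrite lee_fin lerBrDr addrC -lerBrDr ler_expn_ln_div // -N_leE.
  apply: le_trans beta_le
    (@scenario_approach_bound _ _ _ P g _ _ N Q QE (fun U => s * lam U) eta _ _ (ltW eta0)).
  + by move=> l; exact: msat.
  + by move=> x y xy u; exact: cmp_eval_sign_nondecreasing.
  + exact: measurable_funM.
  + by move=> U i; rewrite /g mulrA cmp_sign_sqr mul1r; exact: lam_sat.
- by rewrite ler_powR_invn_ln_div // -N_leE.
- by move=> n n0; rewrite ler_powR_invn_ln_div // -N_leE.
Qed.
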